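(* Let $G$ be a connected bisplit graph, and let $(X,Y,Z)$ be a partition of $V(G)$ into stable sets with $Y$ complete to $Z$ chosen so that $|Y\cup Z|$ is maximum among all such partitions. Let $X_Y$ be the set of vertices of $X$ all of whose neighbours lie in $Y$, and $X_Z$ the set of vertices of $X$ all of whose neighbours lie in $Z$. If $X_Y$ and $X_Z$ are both non-empty, then $G$ has the de Bruijn-Erd\H{o}s property: the metric space $(V(G), d_G)$ has a universal line or at least $|V(G)|$ distinct lines.
   Context: A connected graph $G$ is bisplit if its vertex set can be partitioned into three stable sets $X$, $Y$, $Z$ such that every vertex of $Y$ is adjacent to every vertex of $Z$. $d_G$ is the shortest-path distance. In a metric space $(V,\rho)$, an element $b$ is between $a$ and $c$ if $\rho(a,b)+\rho(b,c)=\rho(a,c)$; three elements are collinear if one is between the other two. For distinct $a,b\in V$, the line generated by $a$ and $b$ is the set consisting of $a$, $b$, and all $c$ such that $a,b,c$ are collinear. A line is universal if it equals $V$. *)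

(* A finite simple graph is a symmetric irreflexive
   relation e on a finType T (vertex set = T). *)
From mathcomp Require Import all_boot.
Set Implicit Arguments.
Unset Strict Implicit.
Unset Printing Implicit Defensive.

Section Graph.
Variables (T : finType) (e : rel T).

Definition simple_graph : Prop := symmetric e /\ irreflexive e.

Definition connected_graph : Prop := forall x y : T, connect e x y.

Definition walkn (x y : T) (n : nat) : bool :=
  [exists p : n.-tuple T, path e x p && (last x p == y)].

(* shortest-path distance d_G; for connected graphs a shortest path
   has fewer than #|T| edges, so the minimum below is the true distance *)
Definition dist (x y : T) : nat :=
  \big[minn/#|T|]_(n < #|T| | walkn x y n) n.

Definition between (a b c : T) : bool := dist a b + dist b c == dist a c.

Definition collinear (a b c : T) : bool :=
  [|| between a b c, between b a c | between a c b].

Definition line (a b : T) : {set T} :=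
  [set c | [|| c == a, c == b | collinear a b c]].

Definition lines : {set {set T}} :=
  [set line ab.1 ab.2 | ab in [set ab : T * T | ab.1 != ab.2]].

Definition universal_line_exists : Prop :=
  exists a b : T, a != b /\ line a b = [set: T].

Definition de_bruijn_erdos : Prop :=
  universal_line_exists \/ #|T| <= #|lines|.

Definition stable (S : {set T}) : Prop :=
  forall u v, u \in S -> v \in S -> ~~ e u v.

Definition bisplit_partition (X Y Z : {set T}) : Prop :=
  [/\ [&& [disjoint X & Y], [disjoint X & Z] & [disjoint Y & Z]],
      X :|: Y :|: Z = [set: T],
      [/\ stable X, stable Y & stable Z] &
      forall y z, y \in Y -> z \in Z -> e y z].

Definition max_bisplit_partition (X Y Z : {set T}) : Prop :=
  bisplit_partition X Y Z /\
  forall X' Y' Z', bisplit_partition X' Y' Z' -> #|Y' :|: Z'| <= #|Y :|: Z|.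

Definition X_nbrs_in (X S : {set T}) : {set T} :=
  [set x in X | [forall v, e x v ==> (v \in S)]].

End Graph.

From mathcomp Require Import all_boot zify.

(* Fix a in X_Y and b in X_Z. By maximality of the partition no vertex of X is isolated, and
   every vertex of X_Y has a non-neighbour in Y, since otherwise it could be moved from X
   to Z; symmetrically for X_Z. The distances between the relevant vertices are then
   determined, or confined to a short range, by their classes, and this decides enough
   collinearities to show that the following map is injective: b goes to the line through
   an edge y0 z0 with y0 in Y and z0 in Z (that line contains Y and Z), each vertex of Y
   or X_Y to its line with b, and every other vertex to its line with a. Hence there are
   at least |V| lines. *)

Set Implicit Arguments.
Unset Strict Implicit.
Unset Printing Implicit Defensive.

Lemma X_nbrs_inP (T : finType) (e : rel T) (X S : {set T}) x :
  reflect (x \in X /\ forall w, e x w -> w \in S) (x \in X_nbrs_in e X S).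
Proof.
rewrite inE; apply: (iffP andP) => -[xX hx]; split=> //.
  by move=> w exw; have /implyP := forallP hx w; apply.
by apply/forallP => w; apply/implyP; apply: hx.
Qed.

Lemma bigmin_le (I : eqType) (r : seq I) (P : pred I) (F : I -> nat) d j :
  j \in r -> P j -> \big[minn/d]_(i <- r | P i) F i <= F j.
Proof.
elim: r => // i r IHr; rewrite inE big_cons => /orP[/eqP <- -> | rj Pj].
  exact: geq_minl.
by case: ifP => _; [apply: leq_trans (geq_minr _ _) _ |]; apply: IHr.
Qed.

Section Graph.
Variables (T : finType) (e : rel T).

(** * Distances and lines in a connected graph *)

Lemma common_nbrP x y : (exists2 w, e x w & e w y) \/ (forall w, e x w -> ~~ e w y).
Proof.
case: (pickP [pred w | e x w && e w y]) => [w /andP[exw ewy] | none]; first by left; exists w.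
by right=> w exw; have /= := none w; rewrite exw => /negbT.
Qed.

Lemma walkn_path x p : path e x p -> walkn e x (last x p) (size p).
Proof. by move=> ep; apply/existsP; exists (in_tuple p); rewrite ep eqxx. Qed.

Lemma dist_le_card x y : dist e x y <= #|T|.
Proof.
apply: (big_ind (fun n => n <= #|T|)) => // [m n hm _ | i _]; last exact: ltnW.
exact: leq_trans (geq_minl _ _) hm.
Qed.

Lemma dist_le_size x p : path e x p -> dist e x (last x p) <= size p.
Proof.
move=> ep; have [lt_p | ge_p] := ltnP (size p) #|T|; last first.
  exact: leq_trans (dist_le_card _ _) ge_p.
rewrite /dist.
have := mem_index_enum (Ordinal lt_p).
by move/(bigmin_le (fun i : 'I_#|T| => val i)); apply; apply: walkn_path.
Qed.

Hypothesis conn : connected_graph e.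

Lemma dist_shortest x y :
  exists p, [/\ path e x p, last x p = y & size p = dist e x y].
Proof.
have [p0 ep0 ->] := connectP (conn x y); case: (shortenP ep0) => p ep up _.
set t := last x p.
(* A duplicate-free walk has fewer than #|T| edges, so the minimum defining [dist] is
   attained by some walk. *)
have lt_p : size p < #|T| by have := max_card (mem (x :: p)); rewrite (card_uniqP up).
have : dist e x t = #|T| \/ walkn e x t (dist e x t).
  apply: (big_ind (fun n => n = #|T| \/ walkn e x t n)) => [|m n|]; [by left | | by right].
  by rewrite /minn; case: ifP.
case=> [eq_d | /existsP[q /andP[pq /eqP lq]]]; last by exists q; rewrite size_tuple.
by have := leq_ltn_trans (dist_le_size ep) lt_p; rewrite eq_d ltnn.
Qed.

Hypothesis sym : symmetric e.

Lemma dist_sym x y : dist e x y = dist e y x.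
Proof.
suff dist_le x' y' : dist e x' y' <= dist e y' x' by apply/eqP; rewrite eqn_leq !dist_le.
have [p [ep <- <-]] := dist_shortest y' x'.
have ep' : path e (last y' p) (rev (belast y' p)).
  by rewrite rev_path (eq_path (fun u v => sym v u)).
have := dist_le_size ep'; rewrite size_rev size_belast.
by case: p {ep ep'} => //= w p; rewrite rev_cons last_rcons.
Qed.

Lemma dist_gt0 x y : x != y -> 0 < dist e x y.
Proof.
have [[|w p] [_ /= <- <-]] // := dist_shortest x y.
by rewrite eqxx.
Qed.

Lemma dist_gt1 x y : x != y -> ~~ e x y -> 1 < dist e x y.
Proof.
have [[|w [|w' p]] [/= ep <- <-]] // := dist_shortest x y.
  by rewrite eqxx.
by rewrite andbT in ep; rewrite ep.
Qed.

Lemma dist_gt2 x y :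
  x != y -> ~~ e x y -> (forall w, e x w -> ~~ e w y) -> 2 < dist e x y.
Proof.
have [[|w [|w' [|w'' p]]] [/= ep <- <-]] // := dist_shortest x y.
- by rewrite eqxx.
- by rewrite andbT in ep; rewrite ep.
- by case/and3P: ep => exw ew _ _ _ /(_ w exw); rewrite ew.
Qed.

Lemma dist_triangle x y z : dist e x z <= dist e x y + dist e y z.
Proof.
have [p [ep lp <-]] := dist_shortest x y; have [q [eq' lq <-]] := dist_shortest y z.
have := dist_le_size (p := p ++ q) (x := x).
by rewrite cat_path last_cat ep lp eq' lq size_cat; apply.
Qed.

Hypothesis irr : irreflexive e.

Lemma adj_neq x y : e x y -> x != y.
Proof. by apply: contraTneq => ->; rewrite irr. Qed.

Lemma dist_adj x y : e x y -> dist e x y = 1.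
Proof.
move=> exy; apply/eqP; rewrite eqn_leq dist_gt0 ?adj_neq // andbT.
by apply: (dist_le_size (p := [:: y])); rewrite /= exy.
Qed.

Lemma dist_le2 x w y : e x w -> e w y -> dist e x y <= 2.
Proof. by move=> exw ewy; apply: leq_trans (dist_triangle x w y) _; rewrite !dist_adj. Qed.

Lemma dist_le3 x w w' y : e x w -> e w w' -> e w' y -> dist e x y <= 3.
Proof.
move=> exw eww' ew'y; apply: leq_trans (dist_triangle x w y) _.
by rewrite dist_adj // ltnS (dist_le2 eww' ew'y).
Qed.

Lemma dist_eq2 x w y : x != y -> ~~ e x y -> e x w -> e w y -> dist e x y = 2.
Proof. by move=> nxy nexy exw ewy; apply/eqP; rewrite eqn_leq (dist_le2 exw ewy) dist_gt1. Qed.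

Lemma dist_eq3 x w w' y : x != y -> ~~ e x y -> (forall v, e x v -> ~~ e v y) ->
  e x w -> e w w' -> e w' y -> dist e x y = 3.
Proof.
move=> nxy nexy nc exw eww' ew'y.
by apply/eqP; rewrite eqn_leq (dist_le3 exw eww' ew'y) dist_gt2.
Qed.

Lemma collinearE a b c : collinear e a b c =
  [|| dist e a b + dist e b c == dist e a c,
      dist e a b + dist e a c == dist e b c |
      dist e a c + dist e b c == dist e a b].
Proof. by rewrite /collinear /between (dist_sym b a) (dist_sym c b). Qed.

Lemma collinear_swap a b c : collinear e a b c = collinear e b a c.
Proof. by rewrite !collinearE (dist_sym b a) [dist e b c + _]addnC orbCA. Qed.

Lemma line_sym a b : line e a b = line e b a.
Proof. by apply/setP => c; rewrite !inE collinear_swap orbCA. Qed.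

Lemma mem_line a b c : collinear e a b c -> c \in line e a b.
Proof. by rewrite inE => ->; rewrite !orbT. Qed.

Lemma mem_line_r a b : b \in line e a b.
Proof. by rewrite inE eqxx orbT. Qed.

Lemma distxx x : dist e x x = 0.
Proof. by apply/eqP; rewrite -leqn0; apply: (dist_le_size (p := [::])). Qed.

Lemma eq_line_same_center c u v :
  (u != v -> v \notin line e c u) -> line e c u = line e c v -> u = v.
Proof.
move=> sep eq_line; apply/eqP; apply: contraTT (mem_line_r c v) => nuv.
by rewrite -eq_line sep.
Qed.

Lemma notin_line a b c :
  dist e a b + dist e b c != dist e a c -> dist e a b + dist e a c != dist e b c ->
  dist e a c + dist e b c != dist e a b -> c != a -> c != b -> c \notin line e a b.
Proof.
move=> h1 h2 h3 nca ncb; rewrite inE collinearE (negbTE nca) (negbTE ncb).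
by rewrite (negbTE h1) (negbTE h2) (negbTE h3).
Qed.

Lemma notin_line_dist23 a b c :
  1 < dist e a b <= 3 -> 1 < dist e a c <= 3 -> 1 < dist e b c <= 3 -> c \notin line e a b.
Proof.
move=> hab hac hbc; apply: notin_line; try lia.
  by apply: contraTneq hac => ->; rewrite distxx.
by apply: contraTneq hbc => ->; rewrite distxx.
Qed.

Lemma notin_line_isosceles a b c :
  dist e a b = dist e a c -> 0 < dist e b c < (dist e a b).*2 -> c \notin line e a b.
Proof.
move=> isos hbc; apply: notin_line; try lia.
  by apply/eqP => eca; move: hbc; rewrite isos eca distxx ltn0 andbF.
by apply: contraTneq hbc => ->; rewrite distxx.
Qed.

(** * Bisplit partitions *)

Section Partition.
Variables X Y Z : {set T}.
Hypothesis P : bisplit_partition e X Y Z.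

Local Notation XY := (X_nbrs_in e X Y).
Local Notation XZ := (X_nbrs_in e X Z).

Lemma bisplit_cases v : [\/ v \in X, v \in Y | v \in Z].
Proof.
case: P => _ cover _ _; have : v \in X :|: Y :|: Z by rewrite cover inE.
by rewrite !inE -orbA => /or3P.
Qed.

Lemma X_stable u v : u \in X -> v \in X -> ~~ e u v.
Proof. by case: P => _ _ [+ _ _] _; apply. Qed.

Lemma Y_stable u v : u \in Y -> v \in Y -> ~~ e u v.
Proof. by case: P => _ _ [_ + _] _; apply. Qed.

Lemma Z_stable u v : u \in Z -> v \in Z -> ~~ e u v.
Proof. by case: P => _ _ [_ _ +] _; apply. Qed.

Lemma YZ_adj y z : y \in Y -> z \in Z -> e y z.
Proof. by case: P => _ _ _; apply. Qed.

Lemma X_notin_Y x : x \in X -> x \notin Y.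
Proof. by case: P => /and3P[dXY _ _] _ _ _ /(disjointFr dXY)->. Qed.

Lemma X_notin_Z x : x \in X -> x \notin Z.
Proof. by case: P => /and3P[_ dXZ _] _ _ _ /(disjointFr dXZ)->. Qed.

Lemma Y_notin_Z y : y \in Y -> y \notin Z.
Proof. by case: P => /and3P[_ _ dYZ] _ _ _ /(disjointFr dYZ)->. Qed.

Lemma Z_notin_Y z : z \in Z -> z \notin Y.
Proof. by apply: contraTN => /Y_notin_Z. Qed.

Lemma XY_neq x y : x \in X -> y \in Y -> x != y.
Proof. by move=> xX; apply: contraTneq => <-; apply: X_notin_Y. Qed.

Lemma XZ_neq x z : x \in X -> z \in Z -> x != z.
Proof. by move=> xX; apply: contraTneq => <-; apply: X_notin_Z. Qed.

Lemma dist_YZ y z : y \in Y -> z \in Z -> dist e y z = 1.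
Proof. by move=> yY zZ; exact: dist_adj (YZ_adj yY zZ). Qed.

Hypothesis X_nonisolated : forall x, x \in X -> exists w, e x w.

Lemma X_nbrs_in_nbr S x : x \in X_nbrs_in e X S -> exists2 w, e x w & w \in S.
Proof.
by case/X_nbrs_inP => xX xS; have [w exw] := X_nonisolated xX; exists w => //; apply: xS.
Qed.

Lemma X_nbrs_in_nadj S x v : x \in X_nbrs_in e X S -> v \notin S -> ~~ e x v.
Proof. by case/X_nbrs_inP => _ xS; apply: contra => /xS. Qed.

Lemma X_notin_XY_nbr_Z x : x \in X -> x \notin XY -> exists2 z, e x z & z \in Z.
Proof.
move=> xX; rewrite inE xX negb_forall => /existsP[z].
rewrite negb_imply => /andP[exz nzY]; exists z => //.
case: (bisplit_cases z) => // zX; last by rewrite zX in nzY.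
by rewrite (negbTE (X_stable xX zX)) in exz.
Qed.

Lemma dist_YY y y' z : y != y' -> y \in Y -> y' \in Y -> z \in Z -> dist e y y' = 2.
Proof.
move=> nyy' yY y'Y zZ.
by apply: (dist_eq2 nyy' (Y_stable yY y'Y) (YZ_adj yY zZ)); rewrite sym YZ_adj.
Qed.

Lemma dist_XZ_Y b y : b \in XZ -> y \in Y -> dist e b y = 2.
Proof.
move=> bXZ yY; have [z ebz zZ] := X_nbrs_in_nbr bXZ.
have bX : b \in X by case/X_nbrs_inP: bXZ.
apply: (dist_eq2 (XY_neq bX yY) (X_nbrs_in_nadj bXZ (Y_notin_Z yY)) ebz).
by rewrite sym YZ_adj.
Qed.

Lemma dist_XZ_Z b y z : b \in XZ -> y \in Y -> z \in Z -> ~~ e b z -> dist e b z = 3.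
Proof.
move=> bXZ yY zZ nebz; have [z' ebz' z'Z] := X_nbrs_in_nbr bXZ.
have /X_nbrs_inP[bX bZ] := bXZ.
apply: (dist_eq3 (w' := y) (XZ_neq bX zZ) nebz _ ebz'); last exact: YZ_adj.
- by move=> w /bZ wZ; apply: Z_stable.
- by rewrite sym YZ_adj.
Qed.

Lemma XY_XZ_neq a b : a \in XY -> b \in XZ -> a != b.
Proof.
move=> aXY bXZ; have [y eay yY] := X_nbrs_in_nbr aXY.
by apply: contraTneq eay => ->; apply: X_nbrs_in_nadj bXZ (Y_notin_Z yY).
Qed.

Lemma dist_XY_XZ a b : a \in XY -> b \in XZ -> dist e a b = 3.
Proof.
move=> aXY bXZ; have [y eay yY] := X_nbrs_in_nbr aXY; have [z ebz zZ] := X_nbrs_in_nbr bXZ.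
have /X_nbrs_inP[aX aY] := aXY; have /X_nbrs_inP[bX _] := bXZ.
apply: (dist_eq3 (XY_XZ_neq aXY bXZ) (X_stable aX bX) _ eay (YZ_adj yY zZ)).
  by move=> w /aY wY; rewrite sym; apply: X_nbrs_in_nadj bXZ (Y_notin_Z wY).
by rewrite sym.
Qed.

Lemma dist_XY_Z a z : a \in XY -> z \in Z -> dist e a z = 2.
Proof.
move=> aXY zZ; have [y eay yY] := X_nbrs_in_nbr aXY; have /X_nbrs_inP[aX _] := aXY.
exact: (dist_eq2 (XZ_neq aX zZ) (X_nbrs_in_nadj aXY (Z_notin_Y zZ)) eay (YZ_adj yY zZ)).
Qed.

Lemma dist_le3_YZ x y z x' : e x y -> y \in Y -> z \in Z -> e z x' -> dist e x x' <= 3.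
Proof. by move=> exy yY zZ; apply: dist_le3 exy (YZ_adj yY zZ). Qed.

Lemma XY_neq_nbr_Z a x z : a \in XY -> e x z -> z \in Z -> a != x.
Proof.
by move=> aXY exz zZ; apply: contraTneq exz => <-; apply: X_nbrs_in_nadj aXY (Z_notin_Y zZ).
Qed.

Lemma XZ_neq_nbr_Y b x y : b \in XZ -> e x y -> y \in Y -> b != x.
Proof.
by move=> bXZ exy yY; apply: contraTneq exy => <-; apply: X_nbrs_in_nadj bXZ (Y_notin_Z yY).
Qed.

Lemma dist_X_gt1 x x' : x \in X -> x' \in X -> x != x' -> 1 < dist e x x'.
Proof. by move=> xX x'X nxx'; rewrite dist_gt1 ?X_stable. Qed.

Lemma Y_notin_line_XZ_Y b y y' : b \in XZ -> y \in Y -> y' \in Y -> y != y' ->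
  y' \notin line e b y.
Proof.
move=> bXZ yY y'Y nyy'; have [z _ zZ] := X_nbrs_in_nbr bXZ.
by apply: notin_line_dist23; rewrite ?(dist_XZ_Y bXZ) ?(dist_YY nyy' yY y'Y zZ).
Qed.

Lemma Z_in_line_XZ_Y b y z : b \in XZ -> y \in Y -> z \in Z -> z \in line e b y.
Proof.
move=> bXZ yY zZ; apply: mem_line; rewrite collinearE (dist_XZ_Y bXZ yY) dist_YZ //.
have [ebz | nebz] := boolP (e b z); first by rewrite dist_adj.
by rewrite (dist_XZ_Z bXZ yY zZ nebz).
Qed.

Lemma mixed_in_line_XZ_Y_adj b y x y' z : b \in XZ -> y \in Y ->
  x \in X -> e x y' -> y' \in Y -> e x z -> z \in Z -> x \in line e b y -> e x y.
Proof.
move=> bXZ yY xX exy' y'Y exz zZ; apply: contraTT => nexy.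
have [z' ebz' z'Z] := X_nbrs_in_nbr bXZ; have /X_nbrs_inP[bX _] := bXZ.
have nbx := XZ_neq_nbr_Y bXZ exy' y'Y.
have dyx : dist e y x = 2.
  by apply: (dist_eq2 _ _ (YZ_adj yY zZ)); rewrite 1?eq_sym ?XY_neq // sym.
have dbx_le3 : dist e b x <= 3 by rewrite dist_sym (dist_le3_YZ exy' y'Y z'Z) // sym.
by apply: notin_line_dist23; rewrite ?dyx ?(dist_XZ_Y bXZ yY) ?dist_X_gt1.
Qed.

Lemma XY_notin_line_XZ_XY b x x' : b \in XZ -> x \in XY -> x' \in XY -> x != x' ->
  x' \notin line e b x.
Proof.
move=> bXZ xXY x'XY nxx'; have [z _ zZ] := X_nbrs_in_nbr bXZ.
have dbX v : v \in XY -> dist e b v = 3 by move=> vXY; rewrite dist_sym dist_XY_XZ.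
have dxz_le2 v : v \in XY -> dist e v z <= 2.
  by move=> vXY; have [y evy yY] := X_nbrs_in_nbr vXY; apply: dist_le2 evy (YZ_adj yY zZ).
have dxx'_le4 : dist e x x' <= 4.
  apply: leq_trans (dist_triangle x z x') _; rewrite (dist_sym z).
  exact: leq_add (dxz_le2 _ xXY) (dxz_le2 _ x'XY).
apply: notin_line_isosceles; first by rewrite !dbX.
by rewrite dist_gt0 // dbX //; apply: leq_ltn_trans dxx'_le4 _.
Qed.

Lemma Z_notin_line_XY_XZ a b z : a \in XY -> b \in XZ -> z \in Z -> ~~ e b z ->
  z \notin line e a b.
Proof.
move=> aXY bXZ zZ nebz; have [y _ yY] := X_nbrs_in_nbr aXY.
by apply: notin_line_dist23;
  rewrite ?(dist_XY_XZ aXY bXZ) ?(dist_XY_Z aXY zZ) ?(dist_XZ_Z bXZ yY zZ nebz).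
Qed.

Lemma mixed_notin_line_XY_XZ a b c y z : a \in XY -> b \in XZ ->
  c \in X -> e c y -> y \in Y -> e c z -> z \in Z -> c \notin line e a b.
Proof.
move=> aXY bXZ cX ecy yY ecz zZ.
have [ya eaya yaY] := X_nbrs_in_nbr aXY; have [zb ebzb zbZ] := X_nbrs_in_nbr bXZ.
have /X_nbrs_inP[aX _] := aXY; have /X_nbrs_inP[bX _] := bXZ.
have dac_le3 : dist e a c <= 3 by rewrite (dist_le3_YZ eaya yaY zZ) // sym.
have dbc_le3 : dist e b c <= 3 by rewrite dist_sym (dist_le3_YZ ecy yY zbZ) // sym.
apply: notin_line_dist23; rewrite ?(dist_XY_XZ aXY bXZ) ?dist_X_gt1 //.
  exact: XY_neq_nbr_Z ecz zZ.
exact: XZ_neq_nbr_Y ecy yY.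
Qed.

Lemma mixed_notin_line_XY_mixed a x y z x' z' : a \in XY ->
  x \in X -> e x y -> y \in Y -> e x z -> z \in Z ->
  x' \in X -> e x' z' -> z' \in Z -> x != x' -> x' \notin line e a x.
Proof.
move=> aXY xX exy yY exz zZ x'X ex'z' z'Z nxx'.
have [ya eaya yaY] := X_nbrs_in_nbr aXY; have /X_nbrs_inP[aX _] := aXY.
have dax_le3 : dist e a x <= 3 by rewrite (dist_le3_YZ eaya yaY zZ) // sym.
have dax'_le3 : dist e a x' <= 3 by rewrite (dist_le3_YZ eaya yaY z'Z) // sym.
have dxx'_le3 : dist e x x' <= 3 by rewrite (dist_le3_YZ exy yY z'Z) // sym.
apply: notin_line_dist23; rewrite ?dist_X_gt1 //.
  exact: XY_neq_nbr_Z exz zZ.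
exact: XY_neq_nbr_Z ex'z' z'Z.
Qed.

Lemma Z_notin_line_XY_common_nbr a x w z z' : a \in XY -> x \in X -> e x z -> z \in Z ->
  e a w -> e w x -> z' \in Z -> z' \notin line e a x.
Proof.
move=> aXY xX exz zZ eaw ewx z'Z; have /X_nbrs_inP[aX aY] := aXY.
have dax : dist e a x = 2.
  by apply: (dist_eq2 (XY_neq_nbr_Z aXY exz zZ) (X_stable aX xX) eaw ewx).
have dxz'_le2 : dist e x z' <= 2.
  by apply: (dist_le2 (w := w)); [rewrite sym | apply: YZ_adj => //; apply: aY].
apply: notin_line_isosceles; first by rewrite dax dist_XY_Z.
by rewrite dist_gt0 ?XZ_neq // dax; apply: leq_ltn_trans dxz'_le2 _.
Qed.

Lemma Y_in_line_XY_adj a x z y : a \in XY -> x \in X -> e x z -> z \in Z ->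
  (forall w, e a w -> ~~ e w x) -> y \in Y -> y \in line e a x -> e a y.
Proof.
move=> aXY xX exz zZ nc yY; apply: contraTT => neay.
have [ya eaya yaY] := X_nbrs_in_nbr aXY; have /X_nbrs_inP[aX aY] := aXY.
have dax : dist e a x = 3.
  apply: (dist_eq3 (XY_neq_nbr_Z aXY exz zZ) (X_stable aX xX) nc eaya (YZ_adj yaY zZ)).
  by rewrite sym.
have day : dist e a y = 3.
  apply: (dist_eq3 (XY_neq aX yY) neay _ eaya (YZ_adj yaY zZ)); last by rewrite sym YZ_adj.
  by move=> w /aY wY; apply: Y_stable.
have dxy_le2 : dist e x y <= 2 by apply: (dist_le2 exz); rewrite sym YZ_adj.
apply: notin_line_isosceles; first by rewrite dax day.
by rewrite dist_gt0 ?(XY_neq xX) // dax; apply: leq_ltn_trans dxy_le2 _.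
Qed.

Lemma Y_in_line_YZ y0 z0 y : y0 \in Y -> z0 \in Z -> y \in Y -> y \in line e y0 z0.
Proof.
move=> y0Y z0Z yY; have [-> | ny0y] := eqVneq y0 y; first by rewrite line_sym mem_line_r.
apply: mem_line; rewrite collinearE (dist_YZ y0Y z0Z) (dist_sym z0) (dist_YZ yY z0Z).
by rewrite (dist_YY ny0y y0Y yY z0Z).
Qed.

End Partition.

Lemma bisplit_partition_mirror X Y Z :
  bisplit_partition e X Y Z -> bisplit_partition e X Z Y.
Proof.
case=> /and3P[dXY dXZ dYZ] cover stab cYZ; split=> //.
- by rewrite dXZ dXY disjoint_sym dYZ.
- by rewrite setUAC.
- by case: stab.
- by move=> z y zZ yY; rewrite sym cYZ.
Qed.

Lemma max_bisplit_partition_mirror X Y Z :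
  max_bisplit_partition e X Y Z -> max_bisplit_partition e X Z Y.
Proof.
case=> P Pmax; split=> [|X' Y' Z' P']; first exact: bisplit_partition_mirror.
by rewrite setUC [Z :|: Y]setUC; apply: Pmax _ _ _ (bisplit_partition_mirror P').
Qed.

Lemma max_bisplit_nonisolated X Y Z x :
  max_bisplit_partition e X Y Z -> x \in X -> exists w, e x w.
Proof.
case=> P Pmax xX; case: (pickP (e x)) => [w exw | isol]; first by exists w.
have all_x v : v = x.
  by have [[|w p] /= exp -> //] := connectP (conn x v); rewrite isol in exp.
have P' : bisplit_partition e set0 setT set0.
  split; rewrite -?setI_eq0 ?set0I ?setI0 ?set0U ?setU0 ?eqxx //.
  - by split=> u v; rewrite ?inE // (all_x u) (all_x v) irr.
  - by move=> y z; rewrite !inE.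
have YZ0 : Y :|: Z = set0.
  apply/setP => v; rewrite (all_x v) !inE.
  by rewrite (negbTE (X_notin_Y P xX)) (negbTE (X_notin_Z P xX)).
by have := Pmax _ _ _ P'; rewrite YZ0 cards0 setU0 cardsT leqn0 => /eqP/card0_eq/(_ x).
Qed.

Lemma bisplit_partition_move_to_Z X Y Z x :
  bisplit_partition e X Y Z -> x \in X_nbrs_in e X Y -> (forall y, y \in Y -> e x y) ->
  bisplit_partition e (X :\ x) Y (x |: Z).
Proof.
move=> P /X_nbrs_inP[xX xY] cxY; have [/and3P[dXY _ _] cover [sX sY sZ] cYZ] := P.
split.
- apply/and3P; split; first exact: disjointWl (subD1set X x) dXY.
    apply/pred0P => v /=; rewrite !inE; case: eqVneq => //= _.
    by case vX: (v \in X); rewrite //= (negbTE (X_notin_Z P vX)).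
  apply/pred0P => v /=; rewrite !inE; case: eqVneq => [-> | _] /=.
    by rewrite (negbTE (X_notin_Y P xX)).
  by case vY: (v \in Y); rewrite //= (negbTE (Y_notin_Z P vY)).
- apply/setP => v; rewrite -cover !inE.
  by case: eqVneq => [-> | _]; rewrite ?xX ?orbT //= orbA.
- split; first by move=> u v /setD1P[_ uX] /setD1P[_ vX]; apply: sX.
    exact: sY.
  move=> u v /setU1P[-> | uZ] /setU1P[-> | vZ]; rewrite ?irr //; last exact: sZ.
    by apply: contraTN vZ => /xY /(Y_notin_Z P).
  by rewrite sym; apply: contraTN uZ => /xY /(Y_notin_Z P).
- by move=> y v yY /setU1P[-> | vZ]; [rewrite sym; apply: cxY | apply: cYZ].
Qed.

Lemma max_bisplit_XY_nonadj X Y Z x :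
  max_bisplit_partition e X Y Z -> x \in X_nbrs_in e X Y -> exists2 y, y \in Y & ~~ e x y.
Proof.
case=> P Pmax xXY; case: (pickP [pred y | (y \in Y) && ~~ e x y]) => [y /andP[] | none].
  by exists y.
have cxY y : y \in Y -> e x y by move=> yY; have /= := none y; rewrite yY => /negbFE.
have /X_nbrs_inP[xX _] := xXY.
have := Pmax _ _ _ (bisplit_partition_move_to_Z P xXY cxY).
by rewrite setUCA cardsU1 inE negb_or (X_notin_Y P xX) (X_notin_Z P xX) ltnn.
Qed.

Section Sides.
Variables X Y Z : {set T}.
Hypothesis Pmax : max_bisplit_partition e X Y Z.
Variables a b : T.
Hypotheses (aXY : a \in X_nbrs_in e X Y) (bXZ : b \in X_nbrs_in e X Z).

Let P : bisplit_partition e X Y Z := proj1 Pmax.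
Let hX : forall x, x \in X -> exists w, e x w :=
  fun x => max_bisplit_nonisolated Pmax (x := x).

Lemma Y_other y : y \in Y -> exists2 y', y' \in Y & y != y'.
Proof.
move=> yY; have [ya eaya yaY] := X_nbrs_in_nbr hX aXY.
have [y' y'Y neay'] := max_bisplit_XY_nonadj Pmax aXY.
have [-> | ] := eqVneq y ya; last by exists ya.
by exists y' => //; apply: contraTneq eaya => ->.
Qed.

Lemma line_XZ_misses_Y u : (u \in Y) || (u \in X_nbrs_in e X Y) ->
  exists2 y, y \in Y & y \notin line e b u.
Proof.
case/orP => [uY | uXY].
  have [y yY nuy] := Y_other uY; exists y => //.
  exact: (Y_notin_line_XZ_Y P hX bXZ uY yY nuy).
have [y yY neuy] := max_bisplit_XY_nonadj Pmax uXY; exists y => //.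
exact: (Z_notin_line_XY_XZ (bisplit_partition_mirror P) hX bXZ uXY yY neuy).
Qed.

End Sides.

(** * An injection from vertices into lines *)

Section Lines.
Variables X Y Z : {set T}.
Hypothesis Pmax : max_bisplit_partition e X Y Z.
Variables a b y0 z0 : T.
Hypotheses (aXY : a \in X_nbrs_in e X Y) (bXZ : b \in X_nbrs_in e X Z).
Hypotheses (y0Y : y0 \in Y) (z0Z : z0 \in Z).

Let P : bisplit_partition e X Y Z := proj1 Pmax.
(* Exchanging Y and Z gives another maximum bisplit partition in which a and b swap roles;
   every lemma about X_Z is applied to X_Y through it, and vice versa. *)
Let Pm : bisplit_partition e X Z Y := bisplit_partition_mirror P.
Let Pmaxm : max_bisplit_partition e X Z Y := max_bisplit_partition_mirror Pmax.
Let hX : forall x, x \in X -> exists w, e x w :=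
  fun x => max_bisplit_nonisolated Pmax (x := x).

Local Notation XY := (X_nbrs_in e X Y).
Local Notation XZ := (X_nbrs_in e X Z).

Definition b_side v := (v \in Y) || (v \in XY).
Definition a_side v := (v != b) && ~~ b_side v.

Definition line_of v :=
  if v == b then line e y0 z0 else if b_side v then line e b v else line e a v.

Variant a_side_spec v : Prop :=
| ASideZ of v \in Z
| ASideXZ of v \in XZ & v != b
| ASideMixed of v \in X & (exists2 y, e v y & y \in Y) & (exists2 z, e v z & z \in Z).

Lemma a_sideP v : a_side v -> a_side_spec v.
Proof.
case/andP => nvb; rewrite /b_side negb_or => /andP[nvY nvXY].
case: (bisplit_cases P v) => [vX | vY | vZ]; [ | by rewrite vY in nvY | exact: ASideZ].
have [vXZ | nvXZ] := boolP (v \in XZ); first exact: ASideXZ.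
apply: ASideMixed => //; last exact: (X_notin_XY_nbr_Z P vX nvXY).
exact: (X_notin_XY_nbr_Z Pm vX nvXZ).
Qed.

Lemma b_side_neq v : b_side v -> v != b.
Proof.
have /X_nbrs_inP[bX _] := bXZ.
case/orP => [vY | vXY]; first by rewrite eq_sym (XY_neq P bX vY).
exact: (XY_XZ_neq P hX vXY bXZ).
Qed.

Variant line_of_spec v : {set T} -> Prop :=
| LineOfB of v = b : line_of_spec v (line e y0 z0)
| LineOfBSide of b_side v : line_of_spec v (line e b v)
| LineOfASide of a_side v : line_of_spec v (line e a v).

Lemma line_ofP v : line_of_spec v (line_of v).
Proof.
rewrite /line_of; case: eqVneq => [-> | nvb]; first exact: LineOfB.
case: ifP => hv; first exact: LineOfBSide.
by apply: LineOfASide; rewrite /a_side nvb hv.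
Qed.

Lemma line_b_neq_line_y0z0 u : b_side u -> line e b u != line e y0 z0.
Proof.
move=> hu; have [y yY nyu] := line_XZ_misses_Y Pmax aXY bXZ hu.
by apply: contraTneq (Y_in_line_YZ P y0Y z0Z yY) => <-.
Qed.

Lemma mem_line_y0z0 w : (w \in Y) || (w \in Z) -> w \in line e y0 z0.
Proof.
case/orP => [wY | wZ]; first exact: (Y_in_line_YZ P y0Y z0Z wY).
by rewrite line_sym (Y_in_line_YZ Pm z0Z y0Y wZ).
Qed.

Lemma line_a_neq_line_y0z0 v : a_side v -> line e a v != line e y0 z0.
Proof.
move=> hv; have [vZXZ | nvZXZ] := boolP ((v \in Z) || (v \in XZ)).
  have [z zZ nzv] := line_XZ_misses_Y Pmaxm bXZ aXY vZXZ.
  have zl : z \in line e y0 z0 by rewrite mem_line_y0z0 // zZ orbT.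
  by apply: contraTneq zl => <-.
case/a_sideP: hv nvZXZ => [-> | -> _ | vX _ [z evz zZ] _]; rewrite ?orbT //.
have [[w eaw ewv] | nc] := common_nbrP a v.
  apply: contraTneq (mem_line_r y0 z0) => <-.
  exact: (Z_notin_line_XY_common_nbr P hX aXY vX evz zZ eaw ewv z0Z).
have [y' y'Y neay'] := max_bisplit_XY_nonadj Pmax aXY.
apply: contraNneq neay' => eq_line.
apply: (Y_in_line_XY_adj P hX aXY vX evz zZ nc y'Y).
by rewrite eq_line mem_line_y0z0 ?y'Y.
Qed.

Lemma line_b_Y_neq_XY u v : u \in Y -> v \in XY -> line e b u != line e b v.
Proof.
move=> uY vXY; have [z zZ nebz] := max_bisplit_XY_nonadj Pmaxm bXZ.
apply: contraTneq (Z_in_line_XZ_Y P hX bXZ uY zZ) => ->.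
by rewrite line_sym (Z_notin_line_XY_XZ P hX vXY bXZ zZ nebz).
Qed.

Lemma line_b_inj u v : b_side u -> b_side v -> line e b u = line e b v -> u = v.
Proof.
case/orP=> [uY | uXY]; case/orP=> [vY | vXY].
- by apply: eq_line_same_center => nuv; apply: (Y_notin_line_XZ_Y P hX bXZ uY vY nuv).
- by move=> eq_line; have := line_b_Y_neq_XY uY vXY; rewrite eq_line eqxx.
- by move=> eq_line; have := line_b_Y_neq_XY vY uXY; rewrite eq_line eqxx.
- by apply: eq_line_same_center => nuv; apply: (XY_notin_line_XZ_XY P hX bXZ uXY vXY nuv).
Qed.

Lemma line_a_Z_neq_XZ u v : u \in Z -> v \in XZ -> line e a u != line e a v.
Proof.
move=> uZ vXZ; have [y yY neay] := max_bisplit_XY_nonadj Pmax aXY.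
apply: contraTneq (Z_in_line_XZ_Y Pm hX aXY uZ yY) => ->.
by rewrite line_sym (Z_notin_line_XY_XZ Pm hX vXZ aXY yY neay).
Qed.

Lemma line_a_Z_neq_mixed u v z : u \in Z -> v \in X -> e v z -> z \in Z ->
  line e a u != line e a v.
Proof.
move=> uZ vX evz zZ; have [[w eaw ewv] | nc] := common_nbrP a v.
  apply: contraTneq (mem_line_r a u) => ->.
  exact: (Z_notin_line_XY_common_nbr P hX aXY vX evz zZ eaw ewv uZ).
have [y yY neay] := max_bisplit_XY_nonadj Pmax aXY.
apply: contraNneq neay => eq_line.
apply: (Y_in_line_XY_adj P hX aXY vX evz zZ nc yY).
by rewrite -eq_line (Z_in_line_XZ_Y Pm).
Qed.

Lemma line_a_XZ_neq_mixed u v y z : u \in XZ -> v \in X -> e v y -> y \in Y ->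
  e v z -> z \in Z -> line e a u != line e a v.
Proof.
move=> uXZ vX evy yY evz zZ; apply: contraTneq (mem_line_r a v) => <-.
by rewrite line_sym (mixed_notin_line_XY_XZ Pm hX uXZ aXY vX evz zZ evy yY).
Qed.

Lemma line_a_inj u v : a_side u -> a_side v -> line e a u = line e a v -> u = v.
Proof.
case/a_sideP=> [uZ | uXZ _ | uX [yu euy yuY] [zu euz zuZ]];
  case/a_sideP=> [vZ | vXZ _ | vX [yv evy yvY] [zv evz zvZ]].
- by apply: eq_line_same_center => nuv; apply: (Y_notin_line_XZ_Y Pm hX aXY uZ vZ nuv).
- by move/eqP; rewrite (negbTE (line_a_Z_neq_XZ uZ vXZ)).
- by move/eqP; rewrite (negbTE (line_a_Z_neq_mixed uZ vX evz zvZ)).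
- by move/esym/eqP; rewrite (negbTE (line_a_Z_neq_XZ vZ uXZ)).
- by apply: eq_line_same_center => nuv; apply: (XY_notin_line_XZ_XY Pm hX aXY uXZ vXZ nuv).
- by move/eqP; rewrite (negbTE (line_a_XZ_neq_mixed uXZ vX evy yvY evz zvZ)).
- by move/esym/eqP; rewrite (negbTE (line_a_Z_neq_mixed vZ uX euz zuZ)).
- by move/esym/eqP; rewrite (negbTE (line_a_XZ_neq_mixed vXZ uX euy yuY euz zuZ)).
- apply: eq_line_same_center => nuv.
  exact: (mixed_notin_line_XY_mixed P hX aXY uX euy yuY euz zuZ vX evz zvZ nuv).
Qed.

Lemma line_b_neq_line_a_Z u v : b_side u -> v \in Z -> line e b u != line e a v.
Proof.
move=> hu vZ; have [y yY nyu] := line_XZ_misses_Y Pmax aXY bXZ hu.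
by apply: contraTneq (Z_in_line_XZ_Y Pm hX aXY vZ yY) => <-.
Qed.

Lemma line_b_Y_neq_line_a_XZ u v : u \in Y -> v \in XZ -> line e b u != line e a v.
Proof.
move=> uY vXZ; have [z zZ nevz] := max_bisplit_XY_nonadj Pmaxm vXZ.
apply: contraTneq (Z_in_line_XZ_Y P hX bXZ uY zZ) => ->.
exact: (Z_notin_line_XY_XZ P hX aXY vXZ zZ nevz).
Qed.

Lemma line_b_Y_neq_line_a_mixed u v y z : u \in Y -> v \in X -> e v y -> y \in Y ->
  e v z -> z \in Z -> line e b u != line e a v.
Proof.
move=> uY vX evy yY evz zZ; have [[w eaw ewv] | nc] := common_nbrP a v.
  apply: contraTneq (Z_in_line_XZ_Y P hX bXZ uY zZ) => ->.
  exact: (Z_notin_line_XY_common_nbr P hX aXY vX evz zZ eaw ewv zZ).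
apply/eqP => eq_line.
have evu : e v u.
  apply: (mixed_in_line_XZ_Y_adj P hX bXZ uY vX evy yY evz zZ).
  by rewrite eq_line mem_line_r.
have eau : e a u.
  by apply: (Y_in_line_XY_adj P hX aXY vX evz zZ nc uY); rewrite -eq_line mem_line_r.
by have := nc u eau; rewrite sym evu.
Qed.

Lemma line_b_XY_neq_line_a u v : u \in XY -> a_side v -> v \notin Z ->
  line e b u != line e a v.
Proof.
move=> uXY hv nvZ; apply: contraTneq (mem_line_r a v) => <-; rewrite line_sym.
case/a_sideP: hv nvZ => [-> // | vXZ nvb _ | vX [y evy yY] [z evz zZ] _].
  by apply: (XY_notin_line_XZ_XY Pm hX uXY bXZ vXZ); rewrite eq_sym.
exact: (mixed_notin_line_XY_XZ P hX uXY bXZ vX evy yY evz zZ).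
Qed.

Lemma line_b_neq_line_a u v : b_side u -> a_side v -> line e b u != line e a v.
Proof.
move=> hu hv; have [vZ | nvZ] := boolP (v \in Z); first exact: line_b_neq_line_a_Z.
case/orP: (hu) => [uY | uXY]; last exact: line_b_XY_neq_line_a.
case/a_sideP: hv nvZ => [-> // | vXZ _ _ | vX [y evy yY] [z evz zZ] _].
  exact: line_b_Y_neq_line_a_XZ.
exact: (line_b_Y_neq_line_a_mixed uY vX evy yY evz zZ).
Qed.

Lemma line_of_inj : injective line_of.
Proof.
move=> u v.
case: (line_ofP u) => [-> | hu | hu]; case: (line_ofP v) => [-> | hv | hv] //.
- by move/esym/eqP; rewrite (negbTE (line_b_neq_line_y0z0 hv)).
- by move/esym/eqP; rewrite (negbTE (line_a_neq_line_y0z0 hv)).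
- by move/eqP; rewrite (negbTE (line_b_neq_line_y0z0 hu)).
- exact: line_b_inj.
- by move/eqP; rewrite (negbTE (line_b_neq_line_a hu hv)).
- by move/eqP; rewrite (negbTE (line_a_neq_line_y0z0 hu)).
- by move/esym/eqP; rewrite (negbTE (line_b_neq_line_a hv hu)).
- exact: line_a_inj.
Qed.

Lemma line_of_in_lines v : line_of v \in lines e.
Proof.
have line_in_lines c w : c != w -> line e c w \in lines e.
  by move=> ncw; apply/imsetP; exists (c, w); rewrite ?inE.
case: (line_ofP v) => [_ | hv | hv]; apply: line_in_lines.
- exact: adj_neq (YZ_adj P y0Y z0Z).
- by rewrite eq_sym b_side_neq.
- by apply: contraTneq hv => <-; rewrite /a_side /b_side aXY orbT andbF.
Qed.

Lemma card_le_lines : #|T| <= #|lines e|.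
Proof.
rewrite -cardsT -(card_imset _ line_of_inj); apply: subset_leq_card.
by apply/subsetP => _ /imsetP[v _ ->]; apply: line_of_in_lines.
Qed.

End Lines.

End Graph.

Theorem proposition2 (T : finType) (e : rel T) (X Y Z : {set T}) :
  simple_graph e -> connected_graph e ->
  max_bisplit_partition e X Y Z ->
  X_nbrs_in e X Y != set0 -> X_nbrs_in e X Z != set0 ->
  de_bruijn_erdos e.
Proof.
move=> [sym irr] conn Pmax /set0Pn[a aXY] /set0Pn[b bXZ]; right.
have hX x : x \in X -> exists w, e x w by apply: max_bisplit_nonisolated Pmax.
have [y0 _ y0Y] := X_nbrs_in_nbr hX aXY; have [z0 _ z0Z] := X_nbrs_in_nbr hX bXZ.
exact: (card_le_lines conn sym irr Pmax aXY bXZ y0Y z0Z).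
Qed.
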